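(* Let $\mu\leq\nu$ and $\lambda$ be infinite cardinals with $2^{\nu^{<\mu}}\leq\lambda$. If $X_1$ is a $[\mu,\nu]$-compact topological space and $X_2$ is an initially $\lambda$-compact topological space, then $X_1\times X_2$ is $[\mu,\nu]$-compact. If moreover every cardinal in the interval $[\mu,\nu]$ is regular, the same conclusion holds under the weaker assumption $2^{\nu}\leq\lambda$ in place of $2^{\nu^{<\mu}}\leq\lambda$.
   Context: No separation axioms are assumed; all topological spaces are nonempty. For infinite cardinals $\mu\leq\nu$, a space is $[\mu,\nu]$-compact if every open cover of cardinality at most $\nu$ has a subcover of cardinality $<\mu$. A space is initially $\lambda$-compact if it is $[\omega,\lambda]$-compact. *)

From HB Require Import structures.
From mathcomp Require Import all_boot all_order.
From mathcomp Require Import all_classical.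
From mathcomp Require Import topology.
Set Implicit Arguments. Unset Strict Implicit. Unset Printing Implicit Defensive.
Local Open Scope classical_set_scope.
Local Open Scope card_scope.

(* Cardinals are represented by types (up to bijection); |A| <= |B| is
   the library's [card_le] (existence of an injection A -> B). *)

Definition card_lt T U (A : set T) (B : set U) :=
  A #<= B /\ ~ (B #<= A).

Definition interval_compact (mu nu : Type) (X : topologicalType) :=
  forall C : set (set X),
    (forall U, C U -> open U) ->
    \bigcup_(U in C) U = setT ->
    C #<= [set: nu] ->
    exists D : set (set X),
      [/\ D `<=` C, card_lt D [set: mu] & \bigcup_(U in D) U = setT].

Definition initially_compact (lam : Type) (X : topologicalType) :=
  interval_compact nat lam X.

(* A representative of the cardinal nu^{<mu}: the set of pairs (A, f) with
   A a subset of mu of cardinality < |mu| and f : A -> nu, i.e. the union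
   over "lengths" A below mu of the function spaces nu^A. *)
Definition pow_lt (nu mu : Type) : Type :=
  { A : { A : set mu | card_lt A [set: mu] } & (sig (proj1_sig A) -> nu) }.

Definition regular_card (T : Type) (K : set T) :=
  forall (I : Type) (F : I -> set T),
    card_lt [set: I] K ->
    (forall i, F i `<=` K) ->
    (forall i, card_lt (F i) K) ->
    \bigcup_i F i <> K.

(* Given an open cover C of X1 * X2 with |C| <= nu, it suffices to find an index type I
   with 2^|I| <= lam and subfamilies delta i of C such that fewer than mu finite
   subfamilies of C always lie in a common delta i: then some delta i covers.  Otherwise
   pick (x i, y i) outside each delta i; [mu,nu]-compactness of X1 yields a point xs
   near which, for every finite F, some x i with F `<=` delta i lies, and initial
   lam-compactness of X2 yields a cluster point ys of the corresponding directed family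
   of sets of y i's; a member of C around (xs, ys) then contains some (x i, y i) it
   should avoid.  For 2^(nu^{<mu}) <= lam take I = nu^{<mu}, delta (A, f) being the
   members of C coded by the range of f.  For regular cardinals and 2^nu <= lam take for
   I an initial segment of a minimal subcover, of its own order type: regularity
   provides the common bounds, and the resulting smaller subcover contradicts
   minimality unless that subcover has fewer than mu members. *)

From HB Require Import structures.
From mathcomp Require Import all_boot all_order.
From mathcomp Require Import all_classical.
From mathcomp Require Import topology.
From mathcomp Require Import wochoice.
Set Implicit Arguments. Unset Strict Implicit. Unset Printing Implicit Defensive.
Local Open Scope classical_set_scope.
Local Open Scope card_scope.

(** * Cardinal arithmetic *)

Lemma card_le_of_inj T U (A : set T) (B : set U) (f : T -> U) :
  (forall x, A x -> B (f x)) -> {in A &, injective f} -> A #<= B.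
Proof.
move=> fAB finj; apply/card_subP; exists (f @` A); first exact: inj_card_eq.
by move=> _ [x Ax <-]; apply: fAB.
Qed.

Lemma inj_of_card_le T U (A : set T) (B : set U) (u0 : U) : A #<= B ->
  exists f : T -> U, (forall x, A x -> B (f x)) /\ {in A &, injective f}.
Proof.
move=> /card_leP[f].
exists (fun x => if pselect (A x) is left h then val (f (SigSub (mem_set h))) else u0).
split=> [x Ax|x y /set_mem Ax /set_mem Ay]; case: pselect => // hx.
  exact: set_valP.
case: pselect => // hy /val_inj/(@inj _ _ _ f).
by rewrite !in_setE => /(_ I I) [].
Qed.

Lemma card_le_nonempty T U (A : set T) (B : set U) :
  A #<= B -> A !=set0 -> B !=set0.
Proof.
move=> AB [a Aa]; apply/set0P/eqP => B0; move: AB; rewrite B0 => /card_le0P A0.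
by rewrite A0 in Aa.
Qed.

Lemma inj_of_card_le_nonempty T U (A : set T) (B : set U) : A #<= B -> A !=set0 ->
  exists f : T -> U, (forall x, A x -> B (f x)) /\ {in A &, injective f}.
Proof. by move=> AB /(card_le_nonempty AB) [u0 _]; exact: inj_of_card_le u0 AB. Qed.

Lemma card_le_lt_trans T U V (A : set T) (B : set U) (C : set V) :
  A #<= B -> card_lt B C -> card_lt A C.
Proof.
move=> AB [BC nCB]; split; first exact: card_le_trans AB BC.
by move=> CA; apply: nCB; exact: card_le_trans CA AB.
Qed.

Lemma card_lt_eqr T U V (A : set T) (B : set U) (B' : set V) :
  card_lt A B -> B #= B' -> card_lt A B'.
Proof.
move=> [AB nBA] /card_eqPle[BB' B'B]; split; first exact: card_le_trans AB BB'.
by move=> B'A; apply: nBA; exact: card_le_trans BB' B'A.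
Qed.

Lemma card_lt_le_trans T U V (A : set T) (B : set U) (C : set V) :
  card_lt A B -> B #<= C -> card_lt A C.
Proof.
move=> [AB nBA] BC; split; first exact: card_le_trans AB BC.
by move=> CA; apply: nBA; exact: card_le_trans BC CA.
Qed.

Lemma card_lt_finite T U (A : set T) (B : set U) :
  finite_set A -> infinite_set B -> card_lt A B.
Proof.
move=> Afin Binf; split; last by move=> /card_le_finite /(_ Afin).
have /finite_set_leP[n An] := Afin.
apply: card_le_trans An _; apply: card_le_trans (card_leT _) _.
exact/infiniteP.
Qed.

Section CardMin.
Variables (T : Type) (AA : set (set T)).

Definition separating_choices (Z : set (set T -> T)) :=
  (forall phi, Z phi -> forall B, AA B -> B (phi B)) /\
  (forall B, AA B -> forall phi psi, Z phi -> Z psi -> phi B = psi B -> phi = psi).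

Lemma separating_choices_bigcup (F : set (set (set T -> T))) :
  F `<=` separating_choices -> total_on F subset ->
  separating_choices (\bigcup_(Z in F) Z).
Proof.
move=> FP Ftot; split.
  by move=> phi [Z FZ Zphi] B AAB; exact: (proj1 (FP Z FZ) phi Zphi B AAB).
move=> B AAB phi psi [Z1 FZ1 Z1phi] [Z2 FZ2 Z2psi].
have [Z12|Z21] := Ftot _ _ FZ1 FZ2.
  by apply: (proj2 (FP Z2 FZ2)) => //; apply: Z12.
by apply: (proj2 (FP Z1 FZ1)) => //; apply: Z21.
Qed.

(* A maximal separating family exhausts some B0 in AA; the functions realizing
   the points of B0 then inject B0 into every B in AA. *)
Lemma exists_card_min : AA !=set0 ->
  exists2 B0, AA B0 & forall B, AA B -> B0 #<= B.
Proof.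
move=> [B1 AAB1].
have [[t0 _]|nT] := pselect (exists t : T, True); last first.
  exists B1 => // B _; have -> : B1 = set0.
    by apply/seteqP; split => // x; exfalso; apply: nT; exists x.
  exact: card_ge0.
have [Z [[Zsel Zsep] Zmax]] := Zorn_bigcup separating_choices_bigcup.
have [[B0 [AAB0 B0sub]]|nex] := pselect (exists B0, AA B0 /\
    forall b, B0 b -> exists2 phi, Z phi & phi B0 = b).
  exists B0 => // B AAB.
  have /choice[Phi HPhi] : forall b, exists phi, B0 b -> Z phi /\ phi B0 = b.
    move=> b; have [Bb|nBb] := pselect (B0 b); last by exists (fun _ => b).
    by have [phi Zphi <-] := B0sub b Bb; exists phi.
  apply: (@card_le_of_inj _ _ _ _ (fun b => Phi b B)).
    by move=> b B0b; exact: (Zsel _ (proj1 (HPhi b B0b)) B AAB).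
  move=> b b' /set_mem B0b /set_mem B0b' eqB.
  have [Zb <-] := HPhi b B0b; have [Zb' <-] := HPhi b' B0b'.
  by rewrite (Zsep B AAB _ _ Zb Zb' eqB).
have /choice[chi Hchi] : forall B, exists b, AA B -> B b /\
    ~ (exists2 phi, Z phi & phi B = b).
  move=> B; have [AAB|nAAB] := pselect (AA B); last by exists t0.
  apply: contrapT => nb; apply: nex; exists B; split => // b Bb.
  by apply: contrapT => nphi; apply: nb; exists b.
have chiZ : ~ Z chi by move=> Zchi; have [_] := Hchi B1 AAB1; apply; exists chi.
exfalso; apply: (Zmax (Z `|` [set chi])).
  split; first by move=> phi Zphi; left.
  by move=> /(_ chi (or_intror erefl)).
split=> [phi [Zphi|->] B AAB|B AAB phi psi [Zphi|->] [Zpsi|->] //].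
- exact: Zsel phi Zphi B AAB.
- exact: (proj1 (Hchi B AAB)).
- exact: Zsep B AAB phi psi Zphi Zpsi.
- by move=> e; have [_] := Hchi B AAB; case; exists phi.
- by move=> e; have [_] := Hchi B AAB; case; exists psi.
Qed.

End CardMin.

Lemma card_le_total T U (A : set T) (B : set U) : A #<= B \/ B #<= A.
Proof.
have eA : @inl T U @` A #= A by apply: inj_card_eq => x y _ _ [].
have eB : @inr T U @` B #= B by apply: inj_card_eq => x y _ _ [].
have [|B0 [->|->] B0min] := @exists_card_min _ [set inl @` A; inr @` B].
- by exists (inl @` A); left.
- by left; rewrite -(card_le_eql eA) -(card_le_eqr eB); apply: B0min; right.
- by right; rewrite -(card_le_eql eB) -(card_le_eqr eA); apply: B0min; left.
Qed.

Lemma card_leX T T' U U' (A : set T) (A' : set T') (B : set U) (B' : set U') :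
  A #<= A' -> B #<= B' -> A `*` B #<= A' `*` B'.
Proof.
move=> AA BB.
have [->|/set0P A0] := eqVneq A set0; first by rewrite set0X; exact: card_ge0.
have [->|/set0P B0] := eqVneq B set0; first by rewrite setX0; exact: card_ge0.
have [f [fA finj]] := inj_of_card_le_nonempty AA A0.
have [g [gB ginj]] := inj_of_card_le_nonempty BB B0.
apply: (@card_le_of_inj _ _ _ _ (fun p => (f p.1, g p.2))).
  by move=> [x y] [/= Ax By]; split; [exact: fA|exact: gB].
move=> [x y] [x' y'] /set_mem [/= Ax By] /set_mem [/= Ax' By'] [] e1 e2.
rewrite (finj x x' (mem_set Ax) (mem_set Ax') e1).
by rewrite (ginj y y' (mem_set By) (mem_set By') e2).
Qed.

(* B `|` C is coded inside B `*` B by tagging B with a0 and (a copy of) C with a1. *)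
Lemma card_setU_le_setX T (B C : set T) (a0 a1 : T) :
  B a0 -> B a1 -> a0 <> a1 -> C #<= B -> B `|` C #<= B `*` B.
Proof.
move=> Ba0 Ba1 a01 CB; have [i [iC iinj]] := inj_of_card_le a0 CB.
apply: (@card_le_of_inj _ _ _ _ (fun x => if pselect (B x) then (x, a0) else (i x, a1))).
  move=> x xBC; case: pselect => [Bx|nBx]; first by split.
  by split => //; apply: iC; case: xBC.
move=> x y /set_mem xBC /set_mem yBC.
case: pselect => [Bx|nBx]; case: pselect => [By|nBy] /= [] //.
- by move=> _ /esym e; case: a01.
- by move=> /iinj; apply; rewrite in_setE; [case: xBC|case: yBC].
Qed.

Lemma infinite_nat_inj T (A : set T) : infinite_set A ->
  exists e : nat -> T, (forall n, A (e n)) /\ injective e.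
Proof.
move=> /infiniteP NA; have [e [eA einj]] := inj_of_card_le_nonempty NA (ex_intro _ 0%N I).
by exists e; split=> [n|m n]; [exact: eA|apply: einj; rewrite in_setE].
Qed.

Section Hessenberg.
Variables (T : Type) (A : set T).

(* Graphs of injections [graph_dom G `*` graph_dom G -> graph_dom G] inside A;
   the domain is read off the diagonal. *)
Definition graph_dom (G : set ((T * T) * T)) := [set x | exists v, G ((x, x), v)].

Definition pairing_graph (G : set ((T * T) * T)) :=
  [/\ (forall p v, G (p, v) -> [/\ graph_dom G p.1, graph_dom G p.2 & graph_dom G v]),
      graph_dom G `<=` A,
      (forall x y, graph_dom G x -> graph_dom G y -> exists v, G ((x, y), v)),
      (forall p v v', G (p, v) -> G (p, v') -> v = v') &
      (forall p p' v, G (p, v) -> G (p', v) -> p = p')].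

Lemma pairing_graph0 : pairing_graph set0.
Proof. by split=> // x [v []]. Qed.

Lemma pairing_graph_card_le G :
  pairing_graph G -> graph_dom G `*` graph_dom G #<= graph_dom G.
Proof.
move=> [Gcl _ Gtot _ Ginj].
have /choice[h Hh] : forall p : T * T,
    exists v, graph_dom G p.1 -> graph_dom G p.2 -> G (p, v).
  move=> [p1 p2]; have [[x1 x2]|np] := pselect (graph_dom G p1 /\ graph_dom G p2).
    by have [v Gv] := Gtot _ _ x1 x2; exists v.
  by exists p1 => a b; case: np.
apply: (@card_le_of_inj _ _ _ _ h).
  by move=> p [p1 p2]; have [] := Gcl _ _ (Hh p p1 p2).
move=> p p' /set_mem [p1 p2] /set_mem [p1' p2'] e.
by apply: (Ginj p p' (h p)); [exact: Hh|rewrite e; exact: Hh].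
Qed.

Lemma pairing_graph_bigcup (F : set (set ((T * T) * T))) :
  F `<=` pairing_graph -> total_on F subset -> pairing_graph (\bigcup_(G in F) G).
Proof.
move=> FP Ftot.
have domU x : graph_dom (\bigcup_(G in F) G) x <-> exists2 G, F G & graph_dom G x.
  split=> [[v [G FG Gv]]|[G FG [v Gv]]]; last by exists v; exists G.
  by exists G => //; exists v.
have upper G G' : F G -> F G' -> exists2 H, F H & G `<=` H /\ G' `<=` H.
  move=> FG FG'; have [GG'|G'G] := Ftot _ _ FG FG'; first by exists G' => //; split.
  by exists G => //; split.
split.
- move=> p v [G FG Gpv]; have [Gcl _ _ _ _] := FP G FG.
  by have [c1 c2 c3] := Gcl p v Gpv; split; apply/domU; exists G.
- by move=> x /domU[G FG Gx]; have [_ GA _ _ _] := FP G FG; exact: GA.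
- move=> x y /domU[G FG [u Gu]] /domU[G' FG' [u' Gu']].
  have [H FH [GH G'H]] := upper G G' FG FG'; have [_ _ Htot _ _] := FP H FH.
  have [v Hv] := Htot x y (ex_intro _ u (GH _ Gu)) (ex_intro _ u' (G'H _ Gu')).
  by exists v; exists H.
- move=> p v v' [G FG Gv] [G' FG' Gv'].
  have [H FH [GH G'H]] := upper G G' FG FG'; have [_ _ _ Hfun _] := FP H FH.
  exact: Hfun (GH _ Gv) (G'H _ Gv').
- move=> p p' v [G FG Gv] [G' FG' Gv'].
  have [H FH [GH G'H]] := upper G G' FG FG'; have [_ _ _ _ Hinj] := FP H FH.
  exact: Hinj (GH _ Gv) (G'H _ Gv').
Qed.

Definition pairing_graph_ext (M : set ((T * T) * T)) (B' : set T) (k : T * T -> T) :=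
  [set q | M q \/ [/\ (graph_dom M `|` B') q.1.1, (graph_dom M `|` B') q.1.2,
    ~ (graph_dom M q.1.1 /\ graph_dom M q.1.2) & q.2 = k q.1]].

Section PairingExtension.
Variables (M : set ((T * T) * T)) (B' : set T) (k : T * T -> T).
Let B := graph_dom M.
Hypotheses (PM : pairing_graph M) (B'A : B' `<=` A) (nBB' : forall x, B' x -> ~ B x).
Hypothesis kB' : forall p, (B `|` B') p.1 /\ (B `|` B') p.2 -> B' (k p).
Hypothesis kinj : {in (B `|` B') `*` (B `|` B') &, injective k}.

Lemma graph_dom_pairing_ext : graph_dom (pairing_graph_ext M B' k) = B `|` B'.
Proof.
apply/seteqP; split=> [x [v [Mx|[Bx _ _ _]]]|x [[v Mv]|B'x]] //.
- by left; exists v.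
- by exists v; left.
exists (k (x, x)); right; split => //=; try by right.
by case=> Bx _; exact: nBB' B'x Bx.
Qed.

Lemma pairing_graph_ext_pairing : pairing_graph (pairing_graph_ext M B' k).
Proof.
have [Mcl MA Mtot Mfun Minj] := PM.
rewrite /pairing_graph graph_dom_pairing_ext; split.
- move=> [x y] v [/Mcl[c1 c2 c3]|[c1 c2 _ /= ->]] /=; first by split; left.
  by split => //; right; apply: kB'.
- by move=> x [/MA //|/B'A].
- move=> x y xB yB; have [[Bx By]|nxy] := pselect (B x /\ B y).
    by have [v Mv] := Mtot x y Bx By; exists v; left.
  by exists (k (x, y)); right.
- move=> [x y] v v' [Mv|[_ _ nb /= ->]] [Mv'|[_ _ nb' /= ->]] //.
  + exact: Mfun Mv Mv'.
  + by have [/= c1 c2 _] := Mcl _ _ Mv; case: nb'.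
  + by have [/= c1 c2 _] := Mcl _ _ Mv'; case: nb.
- move=> [x y] [x' y'] v [Mv|[c1 c2 _ /= ev]] [Mv'|[c1' c2' _ /= ev']].
  + exact: Minj Mv Mv'.
  + have [_ _ Bv] := Mcl _ _ Mv; have := @kB' (x', y') (conj c1' c2').
    by rewrite -ev' => /nBB'.
  + have [_ _ Bv] := Mcl _ _ Mv'; have := @kB' (x, y) (conj c1 c2).
    by rewrite -ev => /nBB'.
  + by apply: kinj; rewrite ?in_setE // -ev -ev'.
Qed.

End PairingExtension.

(* Take for B' a copy of B := graph_dom M inside A `\` B; then
   (B `|` B') `*` (B `|` B') #<= B `*` B #<= B #<= B' provides k. *)
Lemma pairing_graph_extend M (a0 a1 : T) :
  pairing_graph M -> graph_dom M a0 -> graph_dom M a1 -> a0 <> a1 ->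
  graph_dom M #<= A `\` graph_dom M -> exists G, pairing_graph G /\ M `<` G.
Proof.
move=> PM Ba0 Ba1 a01 BAB; set B := graph_dom M in Ba0 Ba1 BAB *.
have /card_subP[B' /card_eqPle[B'leB BleB'] B'AB] := BAB.
have nBB' x : B' x -> ~ B x by move=> /B'AB [].
have [b' B'b'] : B' !=set0 by apply: card_le_nonempty BleB' _; exists a0.
have hB : B `*` B #<= B := pairing_graph_card_le PM.
have hU : B `|` B' #<= B.
  exact: card_le_trans (card_setU_le_setX Ba0 Ba1 a01 B'leB) hB.
have hk : (B `|` B') `*` (B `|` B') #<= B'.
  exact: card_le_trans (card_leX hU hU) (card_le_trans hB BleB').
have [k [kB' kinj]] := inj_of_card_le a0 hk.
exists (pairing_graph_ext M B' k); split.
  by apply: pairing_graph_ext_pairing => // x /B'AB[].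
split=> [q Mq|GM]; first by left.
have [Mcl _ _ _ _] := PM.
have /Mcl[/= /nBB' + _ _] : M ((b', b'), k (b', b')).
  by apply: GM; right; split => //=; [right|right|case=> /nBB'].
by apply.
Qed.

Definition nat_pairing_graph (e : nat -> T) : set ((T * T) * T) :=
  [set q | exists i j, q = ((e i, e j), e (pickle (i, j)))].

Lemma graph_dom_nat_pairing e : graph_dom (nat_pairing_graph e) = range e.
Proof.
apply/seteqP; split=> [x [v [i [j [-> _ _]]]]|_ [i _ <-]]; first by exists i.
by exists (e (pickle (i, i))), i, i.
Qed.

Lemma nat_pairing_graphP e : (forall n, A (e n)) -> injective e ->
  pairing_graph (nat_pairing_graph e).
Proof.
move=> eA einj; rewrite /pairing_graph graph_dom_nat_pairing; split.
- by move=> [x y] v [i [j [-> -> ->]]]; split; eexists.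
- by move=> _ [i _ <-]; exact: eA.
- by move=> _ _ [i _ <-] [j _ <-]; exists (e (pickle (i, j))), i, j.
- move=> [x y] v v' [i [j [-> -> ->]]] [i' [j' [ei ej ->]]].
  by rewrite (einj _ _ ei) (einj _ _ ej).
- move=> [x y] [x' y'] v [i [j [-> -> ->]]] [i' [j' [-> -> /einj]]].
  by move=> /(pcan_inj pickleK) [-> ->].
Qed.

(* Hessenberg: a maximal pairing graph containing one on a copy of nat must have
   A `\` B smaller than its domain B (otherwise it extends), so A #<= B. *)
Lemma card_setXX_le : infinite_set A -> A `*` A #<= A.
Proof.
move=> Ainf; have [e [eA einj]] := infinite_nat_inj Ainf.
pose G0 := nat_pairing_graph e.
(* The empty graph is allowed only so that Zorn's lemma applies to empty chains. *)
pose P G := G = set0 \/ (pairing_graph G /\ G0 `<=` G).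
have chainP (F : set (set ((T * T) * T))) : F `<=` P -> total_on F subset ->
    P (\bigcup_(G in F) G).
  move=> FP Ftot.
  have [->|/set0P[q [G FG Gq]]] := eqVneq (\bigcup_(G in F) G) set0; first by left.
  right; split.
    by apply: pairing_graph_bigcup => // H /FP[->|[]//]; exact: pairing_graph0.
  have [G0e|[_ G0G]] := FP G FG; first by rewrite G0e in Gq.
  by move=> r /G0G Gr; exists G.
have [M [PM Mmax]] := Zorn_bigcup chainP.
have G0e00 : G0 ((e 0%N, e 0%N), e (pickle (0%N, 0%N))) by exists 0%N, 0%N.
have [PgM G0M] : pairing_graph M /\ G0 `<=` M.
  case: PM => // M0; exfalso; apply: (Mmax G0).
    by rewrite M0; split => //; move=> /(_ _ G0e00).
  by right; split => //; exact: nat_pairing_graphP.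
have Be n : graph_dom M (e n).
  have [v G0v] : graph_dom G0 (e n) by rewrite graph_dom_nat_pairing; exists n.
  exists v; exact: G0M.
have e01 : e 0%N <> e 1%N by move=> /einj.
have hB := pairing_graph_card_le PgM.
have [BAB|ABB] := card_le_total (graph_dom M) (A `\` graph_dom M).
  have [G [PG MG]] := pairing_graph_extend PgM (Be 0%N) (Be 1%N) e01 BAB.
  by exfalso; apply: (Mmax G MG); right; split => //; apply: subset_trans G0M (proj1 MG).
have AB : A #<= graph_dom M.
  apply: card_le_trans _ (card_le_trans (card_setU_le_setX (Be 0%N) (Be 1%N) e01 ABB) hB).
  by apply: subset_card_le => x Ax; have [Bx|nBx] := pselect (graph_dom M x); [left|right].
have [_ MA _ _ _] := PgM.
exact: card_le_trans (card_leX AB AB) (card_le_trans hB (subset_card_le MA)).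
Qed.

End Hessenberg.

Lemma card_lt_setU1 T U (A : set T) (B : set U) (b : T) :
  infinite_set B -> card_lt A B -> card_lt (A `|` [set b]) B.
Proof.
move=> Binf AB; have [Afin|Ainf] := pselect (finite_set A).
  by apply: card_lt_finite Binf; rewrite finite_setU; split.
have [e [eA einj]] := infinite_nat_inj Ainf.
have e01 : e 0%N <> e 1%N by move=> /einj.
have bA : [set b] #<= A.
  by apply: (@card_le_of_inj _ _ _ _ (fun=> e 0%N)) => // x y; rewrite !in_setE => -> ->.
apply: card_le_lt_trans AB.
exact: card_le_trans (card_setU_le_setX (eA 0%N) (eA 1%N) e01 bA) (card_setXX_le Ainf).
Qed.

(* Lists are coded by iterating a pairing [h] and tagging nil/cons with two points. *)
Lemma card_seq_le T : infinite_set [set: T] -> [set: seq T] #<= [set: T].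
Proof.
move=> Tinf; have := card_setXX_le Tinf; rewrite setXTT => TT.
have [e [_ einj]] := infinite_nat_inj Tinf.
have [h [_ hinj]] := inj_of_card_le (e 0%N) TT.
have {}hinj : injective h by move=> p q; apply: hinj; rewrite in_setE.
have e01 : e 0%N <> e 1%N by move=> /einj.
pose fix code (s : seq T) : T :=
  if s is x :: s' then h (e 1%N, h (x, code s')) else h (e 0%N, e 0%N).
apply: (@card_le_of_inj _ _ _ _ code) => // s t _ _.
elim: s t => [|x s IH] [|y t] //=.
- by move=> /hinj [] /e01.
- by move=> /hinj [] /esym /e01.
- by move=> /hinj [] /hinj [-> /IH ->].
Qed.

Lemma card_finite_sets_le T : infinite_set [set: T] ->
  [set F : set T | finite_set F] #<= [set: T].
Proof.
move=> Tinf; apply: card_le_trans (card_seq_le Tinf).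
elim/Pchoice: T => T in Tinf *.
have /choice[s Fs] : forall F : set T, exists s : seq T, finite_set F -> F = [set` s].
  move=> F; have [/finite_seqP[s ->]|nF] := pselect (finite_set F); first by exists s.
  by exists [::] => /nF.
apply: (@card_le_of_inj _ _ _ _ s) => // F G; rewrite !in_setE => Ffin Gfin e.
by rewrite (Fs F Ffin) (Fs G Gfin) e.
Qed.

Lemma card_bigcup_finite_le T (FF : set (set T)) :
  (forall F, FF F -> finite_set F) -> \bigcup_(F in FF) F #<= FF `*` [set: nat].
Proof.
move=> FFfin.
have /choice[phi Hphi] : forall x : T, exists F,
    (\bigcup_(F in FF) F) x -> FF F /\ F x.
  move=> x; have [[F FF_F Fx]|nx] := pselect ((\bigcup_(F in FF) F) x).
    by exists F.
  by exists set0.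
have /choice[idx Hidx] : forall F : set T, exists i : T -> nat,
    FF F -> {in F &, injective i}.
  move=> F; have [FF_F|nF] := pselect (FF F); last by exists (fun=> 0%N).
  have /finite_set_leP[n Fn] := FFfin F FF_F.
  have [i [_ iinj]] := inj_of_card_le 0%N (card_le_trans Fn (card_leT _)).
  by exists i.
apply: (@card_le_of_inj _ _ _ _ (fun x => (phi x, idx (phi x) x))).
  by move=> x /Hphi [].
move=> x y /set_mem /Hphi [FFx Fx] /set_mem /Hphi [FFy Fy] [e1 e2].
by rewrite -e1 in e2 Fy; apply: (Hidx _ FFx); rewrite ?in_setE.
Qed.

Lemma card_lt_bigcup_finite T M (FF : set (set T)) : infinite_set [set: M] ->
  card_lt FF [set: M] -> (forall F, FF F -> finite_set F) ->
  card_lt (\bigcup_(F in FF) F) [set: M].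
Proof.
move=> Minf FFlt FFfin; have [FFf|/infiniteP FFinf] := pselect (finite_set FF).
  by apply: card_lt_finite Minf; apply: bigcup_finite.
apply: card_le_lt_trans (card_bigcup_finite_le FFfin) (card_le_lt_trans _ FFlt).
apply: card_le_trans (card_leX (card_lexx FF) FFinf) _.
by apply: card_setXX_le; apply/infiniteP.
Qed.

Definition finite_subsets T (C : set T) := [set F : set T | finite_set F /\ F `<=` C].

Lemma card_finite_subsets_le T N (C : set T) :
  infinite_set [set: N] -> C #<= [set: N] -> finite_subsets C #<= [set: N].
Proof.
move=> Ninf CN; apply: card_le_trans (card_finite_sets_le Ninf).
have [n0 _] := infinite_setN0 Ninf.
have [g [_ ginj]] := inj_of_card_le n0 CN.
apply: (@card_le_of_inj _ _ _ _ (fun F => g @` F)).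
  by move=> F [Ffin _]; exact: finite_image.
move=> F F' /set_mem [_ FC] /set_mem [_ F'C] e.
apply/seteqP; split => U FU.
  have : (g @` F') (g U) by rewrite -e; exists U.
  by move=> [U' F'U' /ginj]; rewrite !in_setE => /(_ (F'C _ F'U') (FC _ FU)) <-.
have : (g @` F) (g U) by rewrite e; exists U.
by move=> [U' FU' /ginj]; rewrite !in_setE => /(_ (FC _ FU') (F'C _ FU)) <-.
Qed.

Lemma finite_subsetsU T (C F F' : set T) :
  finite_subsets C F -> finite_subsets C F' -> finite_subsets C (F `|` F').
Proof.
move=> [Ff FC] [F'f F'C]; split; first by rewrite finite_setU.
by move=> U [/FC|/F'C].
Qed.

Lemma bigcup_finite_subsets_card_lt T M (C : set T) (FF : set (set T)) :
  infinite_set [set: M] -> FF `<=` finite_subsets C -> card_lt FF [set: M] ->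
  \bigcup_(F in FF) F `<=` C /\ card_lt (\bigcup_(F in FF) F) [set: M].
Proof.
move=> Minf FFC FFlt; split; first by move=> U [F /FFC[_ FC] /FC].
by apply: card_lt_bigcup_finite => // F /FFC[].
Qed.

Lemma card_le_powerset T U : [set: T] #<= [set: U] -> [set: set T] #<= [set: set U].
Proof.
move=> TU; have [[t _]|nT] := pselect (exists t : T, True); last first.
  apply: (@card_le_of_inj _ _ _ _ (fun=> set0)) => // S S' _ _ _.
  by apply/seteqP; split => x; case: nT; exists x.
have [f [_ finj]] := inj_of_card_le_nonempty TU (ex_intro _ t I).
have {}finj : injective f by move=> x y; apply: finj; rewrite in_setE.
apply: (@card_le_of_inj _ _ _ _ (image^~ f)) => // S S' _ _ e.
have fE (X : set T) x : X x = (f @` X) (f x) by rewrite image_inj.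
by apply/seteqP; split=> x; rewrite fE [X in _ -> X]fE e.
Qed.

Lemma regular_card_of_image T U (D : set T) (g : T -> U) :
  {in D &, injective g} -> regular_card (g @` D) -> regular_card D.
Proof.
move=> ginj Rg I F IltD FD FltD FU; have eD := card_esym (inj_card_eq ginj).
apply: (Rg I (fun i => g @` F i)).
- exact: card_lt_eqr IltD eD.
- by move=> i _ [x Fx <-]; exists x => //; exact: FD i x Fx.
- by move=> i; apply: card_le_lt_trans (card_image_le _ _) (card_lt_eqr (FltD i) eD).
- rewrite -FU; apply/seteqP; split.
    by move=> _ [i _ [x Fx <-]]; exists x => //; exists i.
  by move=> _ [x [i _ Fx] <-]; exists i => //; exists x.
Qed.

(** * Well-orders and regular cardinals *)

Lemma exists_well_order (T : eqType) : exists R : rel T,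
  [/\ (forall x y, R x y \/ R y x), (forall x y, R x y -> R y x -> x = y),
      (forall x y z, R x y -> R y z -> R x z) &
      (forall P : set T, P !=set0 -> exists2 z, P z & forall x, P x -> R z x)].
Proof.
have [R Rwo] := well_ordering_principle T.
have minP (P : set T) : P !=set0 -> exists2 z, P z & forall x, P x -> R z x.
  move=> [p Pp]; have [|z [[zP zlb] _]] := Rwo (fun x => `[< P x >]).
    by exists p; rewrite unfold_in; apply/asboolP.
  exists z; first by move: zP; rewrite unfold_in => /asboolP.
  by move=> x Px; apply: zlb; rewrite unfold_in; apply/asboolP.
have Rwc : wo_chain R predT by move=> A _; exact: Rwo.
have tot x y : R x y \/ R y x.
  by apply/orP; have := wo_chainW Rwc; apply.
have anti x y : R x y -> R y x -> x = y.
  by move=> Rxy Ryx; apply: (wo_chain_antisymmetric Rwc) => //; rewrite Rxy Ryx.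
exists R; split => // x y z Rxy Ryz.
have [|m Pm Hm] := minP [set t | t = x \/ t = y \/ t = z]; first by exists x; left.
have Rmx := Hm x (or_introl erefl).
have Rmy := Hm y (or_intror (or_introl erefl)).
have Rmz := Hm z (or_intror (or_intror erefl)).
case: Pm => [e|[e|e]]; subst m => //.
  by rewrite (anti x y Rxy Rmx).
by rewrite -(anti y z Ryz Rmy).
Qed.

Section Segments.
Variables (T : eqType) (R : rel T).
Hypothesis (Rtot : forall x y, R x y \/ R y x).
Hypothesis (Ranti : forall x y, R x y -> R y x -> x = y).
Hypothesis (Rtrans : forall x y z, R x y -> R y z -> R x z).
Hypothesis (Rmin : forall P : set T, P !=set0 -> exists2 z, P z & forall x, P x -> R z x).

Definition strict_segment (D : set T) (d : T) := [set x | D x /\ R x d /\ x <> d].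

(* D' is the initial segment of D below its first element with a segment as large as D
   (or D itself if there is none): an initial segment of "order type |D|". *)
Lemma exists_short_segments (D : set T) : exists D' : set T,
  [/\ D' `<=` D, D #<= D' &
      forall d, D' d -> strict_segment D d `<=` D' /\ card_lt (strict_segment D d) D].
Proof.
have [Sne|Se] := pselect ((fun d => D d /\ D #<= strict_segment D d) !=set0).
  have [d0 [Dd0 DFd0] d0min] := Rmin Sne.
  exists (strict_segment D d0); split => //; first by move=> x [].
  move=> d [Dd [Rdd0 dd0]]; split.
    move=> x [Dx [Rxd xd]]; split => //; split; first exact: Rtrans Rxd Rdd0.
    by move=> xd0; subst x; apply: dd0; apply: Ranti.
  split; first by apply: subset_card_le => x [].
  by move=> DFd; apply: dd0; apply: Ranti => //; apply: d0min.
exists D; split => // d Dd; split; first by move=> x [].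
split; first by apply: subset_card_le => x [].
by move=> DFd; apply: Se; exists d.
Qed.

Lemma regular_segment_bound (D D' W : set T) :
  infinite_set D -> D' `<=` D -> D #<= D' ->
  (forall d, D' d -> card_lt (strict_segment D d) D) ->
  regular_card D' -> W `<=` D' -> card_lt W D' ->
  exists2 d, D' d & W `<=` strict_segment D d.
Proof.
move=> Dinf D'D DD' short D'reg WD' WD'lt.
pose F (w : W) := [set x | D' x /\ R x (val w)].
have nU : \bigcup_w F w <> D'.
  apply: D'reg.
  - exact: card_le_lt_trans (proj1 (card_eqPle _ _) (card_setT W)).1 WD'lt.
  - by move=> w x [].
  - move=> [w wW]; have Ww := set_mem wW; rewrite /F /=.
    have : card_lt (strict_segment D w `|` [set w]) D'.
      apply: card_lt_eqr (card_lt_setU1 _ Dinf (short w (WD' w Ww))) _.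
      by apply/card_eqPle; split => //; exact: subset_card_le.
    apply: card_le_lt_trans; apply: subset_card_le => x [D'x Rxw] /=.
    by have [->|xw] := pselect (x = w); [right|left; split => //; exact: D'D].
have [d D'd nd] : exists2 d, D' d & ~ (\bigcup_w F w) d.
  apply: contrapT => nex; apply: nU; apply/seteqP; split; first by move=> x [w _ []].
  by move=> x D'x; apply: contrapT => nx; apply: nex; exists x.
exists d => // w Ww.
have nR : ~ R d w by move=> Rdw; apply: nd; exists (SigSub (mem_set Ww)).
split; first exact/D'D/WD'.
split; first by have [|] := Rtot w d => // /nR.
by move=> wd; apply: nR; rewrite -wd; have [] := Rtot w w.
Qed.

Lemma regular_segment_preimage_bound (D D' W : set T) (k : T -> T) :
  infinite_set D -> D' `<=` D -> D #<= D' ->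
  (forall d, D' d -> card_lt (strict_segment D d) D) -> regular_card D' ->
  (forall x, D x -> D' (k x)) -> W `<=` D -> card_lt W D ->
  exists2 d, D' d & W `<=` [set U | D U /\ strict_segment D d (k U)].
Proof.
move=> Dinf D'D DD' short D'reg kD' WD Wlt.
have kWD' : k @` W `<=` D' by move=> _ [U /WD DU <-]; exact: kD'.
have kWlt : card_lt (k @` W) D'.
  exact: card_le_lt_trans (card_image_le _ _) (card_lt_le_trans Wlt DD').
have [d D'd sub] := regular_segment_bound Dinf D'D DD' short D'reg kWD' kWlt.
by exists d => // U WU; split; [exact: WD|exact: sub (k U) (imageP k WU)].
Qed.

End Segments.

(** * Products with an initially compact factor *)

Lemma initially_compact_cluster lam (X : topologicalType) (BB : set (set X)) :
  initially_compact lam X -> BB #<= [set: lam] -> BB !=set0 ->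
  (forall Y, BB Y -> Y !=set0) ->
  (forall Y Y', BB Y -> BB Y' -> exists2 Z, BB Z & Z `<=` Y `&` Y') ->
  exists y, forall Y, BB Y -> closure Y y.
Proof.
move=> Xc BBle [Y0 BBY0] BBne BBdir; apply: contrapT => ncl.
pose CC := (fun Y => ~` closure Y) @` BB.
have [DD [DDC DDlt DDcov]] : exists DD : set (set X),
    [/\ DD `<=` CC, card_lt DD [set: nat] & \bigcup_(U in DD) U = setT].
  apply: Xc.
  - by move=> _ [Y _ <-]; rewrite openC; exact: closed_closure.
  - apply/seteqP; split => // y _; apply: contrapT => ny; apply: ncl; exists y.
    move=> Y BBY; apply: contrapT => nY; apply: ny; exists (~` closure Y) => //.
    by exists Y.
  - exact: card_le_trans (card_image_le _ _) BBle.
have /finite_seqP[s DDs] : finite_set DD.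
  by apply/finite_setPn => h; case: DDlt => _ /(_ h).
have [Z BBZ HZ] : exists2 Z, BB Z & forall V, V \in s -> forall z, Z z -> ~ V z.
  have : forall V, V \in s -> DD V by rewrite DDs.
  elim: s {DDs} => [|V s IH] sDD; first by exists Y0.
  have [Z' BBZ' HZ'] : exists2 Z, BB Z & forall V, V \in s -> forall z, Z z -> ~ V z.
    by apply: IH => W sW; apply: sDD; rewrite in_cons sW orbT.
  have [Y BBY eV] : CC V by apply/DDC/sDD; exact: mem_head.
  have [Z BBZ ZZY] := BBdir _ _ BBZ' BBY.
  exists Z => // W; rewrite in_cons => /orP[/eqP->|sW] z Zz.
    by rewrite -eV => /(_ (subset_closure (proj2 (ZZY z Zz)))).
  exact: HZ' W sW z (proj1 (ZZY z Zz)).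
have [z Zz] := BBne Z BBZ.
have : (\bigcup_(U in DD) U) z by rewrite DDcov.
by move=> [V + Vz]; rewrite DDs => sV; exact: HZ V sV z Zz Vz.
Qed.

Section ProductCover.
Variables (mu nu lam : Type) (X1 X2 : topologicalType).
Variables (C : set (set (X1 * X2))) (I : Type) (delta : I -> set (set (X1 * X2))).
Hypotheses (X1c : interval_compact mu nu X1) (X2c : initially_compact lam X2).
Hypotheses (Copen : forall U, C U -> open U) (Ccov : \bigcup_(U in C) U = setT).
Hypothesis (finCnu : finite_subsets C #<= [set: nu]).
Hypothesis delta_absorbs : forall FF, FF `<=` finite_subsets C ->
  card_lt FF [set: mu] -> exists i, \bigcup_(F in FF) F `<=` delta i.

Definition absorbing_indices (x : I -> X1) (A : set X1) (F : set (set (X1 * X2))) :=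
  [set i | F `<=` delta i /\ A (x i)].

(* Otherwise every z has a neighbourhood A_z and a finite F_z with no absorbing
   index; grouping the A_z by F_z gives an open cover of X1 of size <= nu, and a
   subcover of size < mu yields, through delta_absorbs, an index i absorbing
   every F_z involved, so that x i lies in none of the A_z. *)
Lemma exists_absorbing_accumulation (x : I -> X1) : exists xs : X1,
  forall A F, open A -> A xs -> finite_subsets C F ->
    absorbing_indices x A F !=set0.
Proof.
apply: contrapT => nxs.
have /choice[AF HAF] : forall z : X1, exists AF : set X1 * set (set (X1 * X2)),
    [/\ open AF.1, AF.1 z, finite_subsets C AF.2 &
        forall i, AF.2 `<=` delta i -> ~ AF.1 (x i)].
  move=> z; apply: contrapT => nz; apply: nxs; exists z => A F Aop Az FinF.
  apply: contrapT => ni; apply: nz; exists (A, F); split => // i Fi Axi.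
  by apply: ni; exists i.
pose Bf F := \bigcup_(z in [set z | (AF z).2 = F]) (AF z).1.
pose CC := Bf @` finite_subsets C.
have [DD [DDC DDlt DDcov]] : exists DD : set (set X1),
    [/\ DD `<=` CC, card_lt DD [set: mu] & \bigcup_(U in DD) U = setT].
  apply: X1c.
  - move=> _ [F _ <-]; apply: bigcup_open => z _.
    by have [] := HAF z.
  - apply/seteqP; split => // z _; exists (Bf (AF z).2).
      by exists (AF z).2 => //; have [] := HAF z.
    by exists z => //; have [] := HAF z.
  - exact: card_le_trans (card_image_le _ _) finCnu.
have /choice[pre Hpre] : forall V : set X1, exists F,
    CC V -> finite_subsets C F /\ Bf F = V.
  move=> V; have [[F FinF <-]|nV] := pselect (CC V); first by exists F.
  by exists set0.
have [i Hi] : exists i, \bigcup_(F in pre @` DD) F `<=` delta i.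
  apply: delta_absorbs.
    by move=> _ [V DDV <-]; have [] := Hpre V (DDC V DDV).
  exact: card_le_lt_trans (card_image_le _ _) DDlt.
have : (\bigcup_(U in DD) U) (x i) by rewrite DDcov.
move=> [V DDV]; have [_ <-] := Hpre V (DDC V DDV).
case=> z /= ez Azx; have [_ _ _ Hz] := HAF z; apply: (Hz i) Azx.
by move=> U FU; apply: Hi; exists (pre V); [exists V|rewrite -ez].
Qed.

(* The images of the absorbing index sets form a directed family of nonempty
   subsets of X2 with at most 2^|I| <= lam members. *)
Lemma exists_absorbing_cluster (x : I -> X1) (y : I -> X2) (xs : X1) :
  [set: set I] #<= [set: lam] ->
  (forall A F, open A -> A xs -> finite_subsets C F ->
    absorbing_indices x A F !=set0) ->
  exists ys : X2, forall A F, open A -> A xs -> finite_subsets C F ->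
    closure (y @` absorbing_indices x A F) ys.
Proof.
move=> Ilam Hxs.
pose BB := [set Y : set X2 | exists A F,
  [/\ open A, A xs, finite_subsets C F & Y = y @` absorbing_indices x A F]].
have [ys Hys] : exists ys, forall Y, BB Y -> closure Y ys; last first.
  by exists ys => A F Aop Axs FinF; apply: Hys; exists A, F.
apply: (initially_compact_cluster X2c).
- apply: (@card_le_trans _ _ _ ((fun S => y @` S) @` [set: set I])).
    by apply: subset_card_le => _ [A [F [_ _ _ ->]]]; exists (absorbing_indices x A F).
  exact: card_le_trans (card_image_le _ _) Ilam.
- exists (y @` absorbing_indices x setT set0), setT, set0.
  by split=> //; [exact: openT|split; [exact: finite_set0|]].
- move=> _ [A [F [Aop Axs FinF ->]]].
  by have [i Si] := Hxs A F Aop Axs FinF; exists (y i), i.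
- move=> _ _ [A [F [Aop Axs FinF ->]]] [A' [F' [A'op A'xs FinF' ->]]].
  exists (y @` absorbing_indices x (A `&` A') (F `|` F')).
    exists (A `&` A'), (F `|` F'); split => //; [exact: openI|exact: finite_subsetsU].
  move=> _ [i [FFi [Ai A'i]] <-].
  by split; exists i => //; split => // U FU; apply: FFi; [left|right].
Qed.

Lemma exists_covering_index : [set: set I] #<= [set: lam] ->
  exists i, \bigcup_(U in delta i) U = setT.
Proof.
move=> Ilam; apply: contrapT => nd.
have /choice[pt Hpt] : forall i, exists p, ~ (\bigcup_(U in delta i) U) p.
  move=> i; apply: contrapT => np; apply: nd; exists i.
  by apply/seteqP; split => // p _; apply: contrapT => npi; apply: np; exists p.
pose x i := (pt i).1; pose y i := (pt i).2.
have [xs Hxs] := exists_absorbing_accumulation x.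
have [ys Hys] := exists_absorbing_cluster y Ilam Hxs.
have : (\bigcup_(U in C) U) (xs, ys) by rewrite Ccov.
move=> [U CU Uxy].
have [QR [QRx QRy] QRU] : nbhs (xs, ys) U.
  by apply: open_nbhs_nbhs; split => //; exact: Copen.
pose A := interior QR.1.
have Axs : A xs by apply: nbhs_singleton; apply: nbhs_interior.
have FinU : finite_subsets C [set U] by split; [exact: finite_set1|move=> V ->].
have [_ [[i [Ui Axi] <-] Ryi]] := Hys A _ (@open_interior _ _) Axs FinU _ QRy.
apply: (Hpt i); exists U; first exact: Ui.
by rewrite (surjective_pairing (pt i)); apply: QRU; split => //; exact: interior_subset.
Qed.

End ProductCover.

Section PowLtFamily.
Variables (mu nu T : Type) (C : set T) (g : T -> nu).
Hypothesis ginj : {in C &, injective g}.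

Definition pow_lt_family (p : pow_lt nu mu) := [set U | C U /\ exists a, g U = projT2 p a].

Lemma pow_lt_family_card_lt (p : pow_lt nu mu) :
  infinite_set [set: mu] -> card_lt (pow_lt_family p) [set: mu].
Proof.
move=> muinf; case: p => [[A Alt] f] /=.
set D := pow_lt_family _.
have [[U0 [CU0 [a0 _]]]|nD] := pselect (D !=set0); last first.
  have -> : D = set0 by apply/seteqP; split => // U DU; apply: nD; exists U.
  split; first exact: card_ge0.
  by move/card_le0P => mu0; apply: muinf; rewrite mu0; exact: finite_set0.
have /choice[phi Hphi] : forall U, exists a : sig A, D U -> g U = f a.
  by move=> U; have [[_ [a ea]]|nU] := pselect (D U); [exists a|exists a0].
have DA : D #<= [set: sig A].
  apply: (@card_le_of_inj _ _ _ _ phi) => // U V /set_mem DU /set_mem DV e.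
  by apply: ginj; rewrite ?in_setE ?(Hphi U DU) ?(Hphi V DV) ?e //; [case: DU|case: DV].
have AA : [set: sig A] #<= A.
  apply: (@card_le_of_inj _ _ _ _ (@proj1_sig _ A)); first by move=> [a Aa].
  move=> [a Aa] [b Ab] _ _ /= e; move: Ab; rewrite -e => Ab.
  by rewrite (Prop_irrelevance Aa Ab).
exact: card_le_lt_trans DA (card_le_lt_trans AA Alt).
Qed.

Lemma pow_lt_family_sup (W : set T) : W `<=` C -> card_lt W [set: mu] ->
  exists p : pow_lt nu mu, W `<=` pow_lt_family p.
Proof.
move=> WC Wlt.
have [m0 _] : [set: mu] !=set0.
  by apply/set0P/eqP => mu0; apply: (proj2 Wlt); rewrite mu0; exact: card_ge0.
have [j [_ jinj]] := inj_of_card_le m0 (proj1 Wlt).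
have Alt : card_lt (j @` W) [set: mu].
  exact: card_le_lt_trans (card_image_le _ _) Wlt.
have /choice[jinv Hjinv] : forall a : sig (j @` W), exists U, W U /\ j U = proj1_sig a.
  by move=> [m [U WU jU]]; exists U.
exists (existT _ (exist _ (j @` W) Alt) (fun a => g (jinv a))).
move=> U WU; split; first exact: WC.
have jWU : (j @` W) (j U) by exists U.
exists (exist _ (j U) jWU) => /=.
have [Wj ej] := Hjinv (exist _ (j U) jWU).
by rewrite (jinj _ _ (mem_set Wj) (mem_set WU) ej).
Qed.

End PowLtFamily.

Lemma interval_compactX_pow_lt (mu nu lam : Type) (X1 X2 : topologicalType) :
  infinite_set [set: mu] -> infinite_set [set: nu] ->
  [set: set (pow_lt nu mu)] #<= [set: lam] ->
  interval_compact mu nu X1 -> initially_compact lam X2 ->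
  interval_compact mu nu (X1 * X2)%type.
Proof.
move=> muinf nuinf Plam X1c X2c C Copen Ccov Cnu.
have [n0 _] := infinite_setN0 nuinf.
have [g [_ ginj]] := inj_of_card_le n0 Cnu.
have [p covp] : exists p : pow_lt nu mu, \bigcup_(U in pow_lt_family C g p) U = setT.
  apply: (exists_covering_index (delta := pow_lt_family C g) X1c X2c Copen Ccov _ _ Plam).
    exact: card_finite_subsets_le nuinf Cnu.
  move=> FF FFC FFlt.
  have [WC Wlt] := bigcup_finite_subsets_card_lt muinf FFC FFlt.
  exact: pow_lt_family_sup WC Wlt.
exists (pow_lt_family C g p); split => //; first by move=> U [].
exact: pow_lt_family_card_lt.
Qed.

(* By regularity, fewer than mu members of D0 lie below some d of the initial segment D',
   and then the members of D0 below d already form a subcover smaller than D0. *)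
Lemma minimal_cover_card_lt (mu nu lam : Type) (X1 X2 : topologicalType)
    (D0 : set (set (X1 * X2))) :
  infinite_set [set: mu] -> infinite_set [set: nu] ->
  (forall K : set nu, [set: mu] #<= K -> regular_card K) ->
  [set: set nu] #<= [set: lam] ->
  interval_compact mu nu X1 -> initially_compact lam X2 ->
  (forall U, D0 U -> open U) -> \bigcup_(U in D0) U = setT -> D0 #<= [set: nu] ->
  (forall D, D `<=` D0 -> \bigcup_(U in D) U = setT -> D0 #<= D) ->
  card_lt D0 [set: mu].
Proof.
move=> muinf nuinf Hreg Plam X1c X2c D0open D0cov D0nu D0min.
apply: contrapT => nD0lt.
have muD0 : [set: mu] #<= D0.
  have [D0mu|//] := card_le_total D0 [set: mu].
  by apply: contrapT => nmuD0; apply: nD0lt.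
have D0inf : infinite_set D0 by move=> /(card_le_finite muD0).
have [R [Rtot Ranti Rtrans Rmin]] := exists_well_order (set (X1 * X2)).
have [D' [D'D0 D0D' D'seg]] := exists_short_segments Ranti Rtrans Rmin D0.
have D'nu : D' #<= [set: nu] := card_le_trans (subset_card_le D'D0) D0nu.
have D'reg : regular_card D'.
  have [n0 _] := infinite_setN0 nuinf; have [g [_ ginj]] := inj_of_card_le n0 D'nu.
  apply: (regular_card_of_image ginj); apply: Hreg.
  apply: card_le_trans muD0 (card_le_trans D0D' _).
  exact: (proj1 (card_eqPle _ _) (inj_card_eq ginj)).2.
have [k [kD' kinj]] := inj_of_card_le_nonempty D0D' (infinite_setN0 D0inf).
pose delta (d : D') := [set U | D0 U /\ strict_segment R D0 (val d) (k U)].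
have [d covd] : exists d, \bigcup_(U in delta d) U = setT.
  apply: (exists_covering_index (delta := delta) X1c X2c D0open D0cov _ _ _).
  - exact: card_finite_subsets_le nuinf D0nu.
  - move=> FF FFD0 FFlt.
    have [WD0 Wlt] := bigcup_finite_subsets_card_lt muinf FFD0 FFlt.
    have [e D'e sub] := regular_segment_preimage_bound Rtot D0inf D'D0 D0D'
      (fun d D'd => (D'seg d D'd).2) D'reg kD' WD0 (card_lt_le_trans Wlt muD0).
    by exists (SigSub (mem_set D'e)).
  - apply: card_le_trans _ Plam; apply: card_le_powerset.
    exact: card_le_trans (proj1 (card_eqPle _ _) (card_setT D')).1 D'nu.
have [_ seg_lt] := D'seg _ (set_mem (valP d)).
apply: (proj2 seg_lt); apply: card_le_trans (D0min (delta d) _ covd) _.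
  by move=> U [].
apply: (@card_le_of_inj _ _ _ _ k); first by move=> U [].
by move=> U V /set_mem [D0U _] /set_mem [D0V _]; apply: kinj; rewrite in_setE.
Qed.

Lemma interval_compactX_regular (mu nu lam : Type) (X1 X2 : topologicalType) :
  infinite_set [set: mu] -> infinite_set [set: nu] ->
  (forall K : set nu, [set: mu] #<= K -> regular_card K) ->
  [set: set nu] #<= [set: lam] ->
  interval_compact mu nu X1 -> initially_compact lam X2 ->
  interval_compact mu nu (X1 * X2)%type.
Proof.
move=> muinf nuinf Hreg Plam X1c X2c C Copen Ccov Cnu.
have [D0 [D0C D0cov] D0min] :=
  @exists_card_min _ [set D | D `<=` C /\ \bigcup_(U in D) U = setT]
    (ex_intro _ C (conj (@subset_refl _ C) Ccov)).
exists D0; split => //.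
apply: minimal_cover_card_lt muinf nuinf Hreg Plam X1c X2c _ D0cov _ _.
- by move=> U /D0C /Copen.
- exact: card_le_trans (subset_card_le D0C) Cnu.
- by move=> D DD0 Dcov; apply: D0min; split => //; apply: subset_trans DD0 D0C.
Qed.

Unset Implicit Arguments.
Set Strict Implicit.

Theorem proposition3p2 (mu nu lam : Type) :
  infinite_set [set: mu] -> infinite_set [set: nu] -> infinite_set [set: lam] ->
  [set: mu] #<= [set: nu] ->
  (* first part: 2^(nu^{<mu}) <= lambda *)
  ([set: set (pow_lt nu mu)] #<= [set: lam] ->
   forall X1 X2 : topologicalType, inhabited X1 -> inhabited X2 ->
     interval_compact mu nu X1 -> initially_compact lam X2 ->
     interval_compact mu nu (X1 * X2)%type) /\
  (* second part: all cardinals in [mu, nu] regular, and 2^nu <= lambda *)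
  ((forall K : set nu, [set: mu] #<= K -> regular_card K) ->
   [set: set nu] #<= [set: lam] ->
   forall X1 X2 : topologicalType, inhabited X1 -> inhabited X2 ->
     interval_compact mu nu X1 -> initially_compact lam X2 ->
     interval_compact mu nu (X1 * X2)%type).
Proof.
move=> muinf nuinf _ _; split=> [Plam X1 X2 _ _|Hreg Plam X1 X2 _ _].
  exact: interval_compactX_pow_lt.
exact: interval_compactX_regular.
Qed.
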